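(* Let $E$ be an arbitrary directed graph, let $c$ be a cycle without exits in $E$, and let $H=\overline{c^0}$ be the saturated closure of the set $c^0$ of vertices of $c$. The following are equivalent: (i) $|F_E(c^0)|<\infty$; (ii) $H$ satisfies Condition (F) and $B_H=\emptyset$.
   Context: Let $E=(E^0,E^1,r,s)$ be a directed graph. A vertex $v$ is an infinite emitter if $s^{-1}(v)$ is infinite ($\mathrm{Inf}(E)$ is the set of them) and regular if $0<|s^{-1}(v)|<\infty$. Paths $\mu=\mu_1\cdots\mu_n$ ($r(\mu_i)=s(\mu_{i+1})$), $s(\mu)=s(\mu_1)$, $r(\mu)=r(\mu_n)$, $|\mu|=n$; vertices are paths of length $0$; $\mathrm{Path}(E)$ is the set of finite paths. A cycle is a path $c=e_1\cdots e_n$, $n\ge1$, with $r(e_n)=s(e_1)$ and $s(e_i)\neq s(e_j)$ for $i\ne j$; $c^0$ denotes its set of vertices. An exit of $c$ is an edge $e$ with $s(e)=s(e_i)$ for some $i$ and $e\neq e_i$; $c$ is without exits if it has none. $H\subseteq E^0$ is hereditary if $v\in H$ and a path from $v$ to $w$ imply $w\in H$; saturated if every regular $v$ with $r(s^{-1}(v))\subseteq H$ lies in $H$. The saturated closure $\overline{Y}$ of a hereditary set $Y$ is the smallest hereditary saturated set containing $Y$. For $Y\subseteq E^0$, $F_E(Y)$ is the set of paths $\alpha$ of length $\ge1$ with $s(\alpha_1)\notin Y$, $r(\alpha_i)\notin Y$ for $i<|\alpha|$, $r(\alpha_{|\alpha|})\in Y$. For hereditary saturated $H$, $B_H=\{v\in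 E^0\setminus H: v\in\mathrm{Inf}(E),\ 0<|s^{-1}(v)\cap r^{-1}(E^0\setminus H)|<\infty\}$ and $F'_E(H)=\{\alpha\in F_E(H): s(\alpha_{|\alpha|})\notin B_H\}$. $H$ satisfies Condition (F) if $H\cup F'_E(H)\cup\{\alpha\in\mathrm{Path}(E): r(\alpha)\in B_H\}$ is a finite set. *)

From Stdlib Require Import List.
Import ListNotations.
Set Implicit Arguments.
Unset Strict Implicit.

Record graph := Graph { V : Type; Ed : Type; src : Ed -> V; rng : Ed -> V }.
Arguments src {g} e.
Arguments rng {g} e.

Definition fin (T : Type) (P : T -> Prop) : Prop :=
  exists l : list T, forall x, P x -> In x l.

Section G.
Variable G : graph.

Fixpoint chain (es : list (Ed G)) : Prop :=
  match es with
  | [] => True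
  | e :: t => match t with
              | [] => True
              | f :: _ => rng e = src f /\ chain t
              end
  end.

(* A finite path is a pair (start vertex, edge list); vertices are the
   paths (v, []) of length 0. *)
Definition path := (V G * list (Ed G))%type.

Definition is_path (p : path) : Prop :=
  match snd p with
  | [] => True
  | e :: _ => src e = fst p /\ chain (snd p)
  end.

Fixpoint endv (v : V G) (es : list (Ed G)) : V G :=
  match es with [] => v | e :: t => endv (rng e) t end.

Definition pend (p : path) : V G := endv (fst p) (snd p).

(* source of the last edge (meaningful for nonempty edge lists) *)
Fixpoint lsrc (v : V G) (es : list (Ed G)) : V G :=
  match es with
  | [] => v
  | e :: t => match t with [] => src e | _ => lsrc v t end
  end.

Definition infinite_emitter (v : V G) : Prop := ~ fin (fun e => src e = v).
Definition regular (v : V G) : Prop :=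
  (exists e, src e = v) /\ fin (fun e => src e = v).

Definition hereditary (H : V G -> Prop) : Prop :=
  forall p, is_path p -> H (fst p) -> H (pend p).
Definition saturated (H : V G -> Prop) : Prop :=
  forall v, regular v -> (forall e, src e = v -> H (rng e)) -> H v.

Definition sat_closure (Y : V G -> Prop) (w : V G) : Prop :=
  forall H, hereditary H -> saturated H -> (forall y, Y y -> H y) -> H w.

Definition F_E (Y : V G -> Prop) (p : path) : Prop :=
  is_path p /\ snd p <> [] /\ ~ Y (fst p) /\
  (forall i e, nth_error (snd p) i = Some e -> S i < length (snd p) -> ~ Y (rng e)) /\
  Y (pend p).

Definition B_H (H : V G -> Prop) (v : V G) : Prop :=
  ~ H v /\ infinite_emitter v /\
  (exists e, src e = v /\ ~ H (rng e)) /\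
  fin (fun e => src e = v /\ ~ H (rng e)).

Definition F'_E (H : V G -> Prop) (p : path) : Prop :=
  F_E H p /\ ~ B_H H (lsrc (fst p) (snd p)).

(* Condition (F): H ∪ F'_E(H) ∪ {alpha in Path(E) : r(alpha) in B_H} finite,
   vertices of H viewed as paths of length 0. *)
Definition condF (H : V G -> Prop) : Prop :=
  fin (fun p : path => (snd p = [] /\ H (fst p)) \/ F'_E H p \/
                       (is_path p /\ B_H H (pend p))).

Definition is_cycle (c : list (Ed G)) : Prop :=
  match c with
  | [] => False
  | e :: t => chain c /\ endv (rng e) t = src e /\ NoDup (map src c)
  end.

Definition no_exits (c : list (Ed G)) : Prop :=
  forall e f, In f c -> src e = src f -> e = f.

Definition cverts (c : list (Ed G)) (v : V G) : Prop := In v (map src c).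

End G.

(* Since [c] has no exits, [Y = c^0] is hereditary and its saturated closure [H]
   is obtained by repeatedly adding regular vertices all of whose edges lead
   into what is already there.  By induction along this generation, every
   vertex of [H \ Y] starts a path of [F_E(Y)], and, regular vertices having
   finitely many edges, only finitely many.
   Cutting a path of [F_E(Y)] where it first enters [H] writes it as a path of
   [F_E(H)] followed by a path of [F_E(Y)] starting in [H]; conversely every
   path of [F_E(H)] extends to one of [F_E(Y)].  Hence [F_E(Y)] is finite iff
   [H] and [F_E(H)] are; and when [F_E(Y)] is finite no vertex is in [B_H],
   since all but finitely many of its edges would start paths of [F_E(Y)]. *)

From Stdlib Require Import List Classical Lia.
Import ListNotations.

Section Finite.
Context {A B : Type}.

Lemma fin_subset {P Q : A -> Prop} : fin Q -> (forall x, P x -> Q x) -> fin P.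
Proof. intros [l Hl] HPQ. exists l. auto. Qed.

Lemma fin_union {P Q : A -> Prop} : fin P -> fin Q -> fin (fun x => P x \/ Q x).
Proof.
  intros [l1 H1] [l2 H2]. exists (l1 ++ l2).
  intros x [Hx|Hx]; apply in_or_app; auto.
Qed.

Lemma fin_bigcup {P : A -> Prop} {S : A -> B -> Prop} :
  fin P -> (forall a, P a -> fin (S a)) -> fin (fun b => exists a, P a /\ S a b).
Proof.
  intros [l Hl] HS.
  assert (Hcover : forall l, exists m, forall a b, In a l -> P a -> S a b -> In b m).
  { induction l0 as [|a0 l0 [m Hm]].
    - exists []. intros a b [].
    - destruct (classic (P a0)) as [Ha0|Ha0].
      + destruct (HS a0 Ha0) as [m0 Hm0]. exists (m0 ++ m).
        intros a b [<-|Ha] HPa HSab; apply in_or_app; eauto.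
      + exists m. intros a b [<-|Ha] HPa HSab; [contradiction|eauto]. }
  destruct (Hcover l) as [m Hm]. exists m. intros b (a & HPa & HSab). eauto.
Qed.

Lemma fin_image (f : A -> B) {P : A -> Prop} :
  fin P -> fin (fun b => exists a, P a /\ b = f a).
Proof.
  intros [l Hl]. exists (map f l). intros b (a & HPa & ->). apply in_map. auto.
Qed.

Lemma fin_prefixes {P : A * list B -> Prop} :
  fin P -> fin (fun p => exists g, P (fst p, snd p ++ g)).
Proof.
  intros [l Hl].
  exists (flat_map (fun q => map (fun k => (fst q, firstn k (snd q)))
                                 (seq 0 (S (length (snd q))))) l).
  intros [a b] [g Hg]. apply in_flat_map. exists (a, b ++ g). split; [auto|].
  apply in_map_iff. exists (length b). simpl.
  rewrite firstn_app, firstn_all, PeanoNat.Nat.sub_diag, app_nil_r. split; [reflexivity|].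
  apply (in_seq (S _) 0). rewrite length_app. lia.
Qed.

End Finite.

Section EntryPaths.
Context {G : graph}.
Implicit Types (Y H : V G -> Prop) (v : V G) (e : Ed G) (es : list (Ed G)).

Fixpoint entry_path Y v es : Prop :=
  match es with
  | [] => False
  | e :: t => src e = v /\ ~ Y v /\ ((Y (rng e) /\ t = []) \/ entry_path Y (rng e) t)
  end.

Lemma F_E_entry_path Y es v : F_E Y (v, es) <-> entry_path Y v es.
Proof.
  revert v. induction es as [|e t IH]; intros v.
  - unfold F_E; simpl. split; [intros (_ & Hnil & _); congruence | tauto].
  - destruct t as [|f t'].
    + unfold F_E, pend; simpl. split.
      * intros ((Hs & _) & _ & Hv & _ & Hy). auto.
      * intros (Hs & Hv & [[Hy _]|[]]). repeat split; auto; try congruence.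
        intros i e' _ Hi. lia.
    + split.
      * intros ((Hs & Hr & Hc) & _ & Hv & Hi & Hy). split; [exact Hs|]. split; [exact Hv|].
        right. apply (proj1 (IH (rng e))). unfold F_E, pend in *; simpl in *.
        repeat split; auto; try congruence.
        -- apply (Hi 0 e); simpl; auto; lia.
        -- intros i g Hn Hl. apply (Hi (S i) g); simpl; auto; lia.
      * intros (Hs & Hv & [[_ Hnil]|Hf]); [discriminate|]. apply IH in Hf.
        destruct Hf as ((Hsf & Hc) & _ & Hr & Hi & Hy).
        unfold F_E, pend in *; simpl in *.
        repeat split; auto; try congruence.
        intros [|j] g Hn Hl.
        -- simpl in Hn. inversion Hn; subst. exact Hr.
        -- apply (Hi j g); simpl in *; auto; lia.
Qed.

Lemma entry_path_endv {Y es v} : entry_path Y v es -> Y (endv v es).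
Proof.
  revert v. induction es as [|e t IH]; intros v Hp; simpl in *; [contradiction|].
  destruct Hp as (_ & _ & [[Hy ->]|Hp]); simpl; auto.
Qed.

Section TwoSets.
Context {Y H : V G -> Prop}.
Hypothesis YH : forall v, Y v -> H v.

Lemma entry_path_narrow {es v} : entry_path H v es -> Y (endv v es) -> entry_path Y v es.
Proof.
  revert v. induction es as [|e t IH]; intros v Hp Hy; simpl in *; [contradiction|].
  destruct Hp as (Hs & Hv & [[Hh ->]|Hp]); repeat split; auto.
Qed.

Lemma entry_path_app {b g v} :
  entry_path H v b -> entry_path Y (endv v b) g -> entry_path Y v (b ++ g).
Proof.
  revert v. induction b as [|e t IH]; intros v Hb Hg; simpl in *; [contradiction|].
  destruct Hb as (Hs & Hv & [[Hh ->]|Hb]); repeat split; auto.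
Qed.

Lemma entry_path_split {es v} : entry_path Y v es -> ~ H v ->
  exists b g, es = b ++ g /\ entry_path H v b /\ (g = [] \/ entry_path Y (endv v b) g).
Proof.
  revert v. induction es as [|e t IH]; intros v Hp Hv; simpl in *; [contradiction|].
  destruct Hp as (Hs & HvY & Hr).
  destruct (classic (H (rng e))) as [Hh|Hh].
  - exists [e], t. simpl. destruct Hr as [[_ ->]|Hr]; intuition.
  - destruct Hr as [[Hy _]|Hr]; [exfalso; auto|].
    destruct (IH (rng e) Hr Hh) as (b & g & -> & Hb & Hg).
    exists (e :: b), g. simpl. intuition.
Qed.

End TwoSets.

Lemma is_path_cons v e t : is_path (v, e :: t) -> src e = v /\ is_path (rng e, t).
Proof. unfold is_path; simpl. destruct t; simpl; intuition. Qed.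

Section Closure.
Variable Y : V G -> Prop.

Inductive sat_gen : V G -> Prop :=
| sat_gen_base v : Y v -> sat_gen v
| sat_gen_step v : regular v -> (forall e, src e = v -> sat_gen (rng e)) -> sat_gen v.

Lemma sat_gen_entry_path {w} : sat_gen w -> ~ Y w -> exists g, entry_path Y w g.
Proof.
  induction 1 as [v Hy|v [[e He] _] _ IH]; intros Hv; [contradiction|].
  destruct (classic (Y (rng e))) as [Hy|Hy].
  - exists [e]. simpl. auto.
  - destruct (IH e He Hy) as [g Hg]. exists (e :: g). simpl. auto.
Qed.

Lemma sat_gen_fin_entry_paths {w} : sat_gen w -> fin (entry_path Y w).
Proof.
  induction 1 as [v Hy|v [_ Hfin] _ IH].
  - exists []. intros [|e t] Hp; simpl in Hp; tauto.
  - apply (fin_subset (Q := fun g => exists e, src e = v /\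
             (g = [e] \/ exists t, g = e :: t /\ entry_path Y (rng e) t))).
    + apply (fin_bigcup Hfin). intros e He.
      destruct (IH e He) as [m Hm]. exists ([e] :: map (cons e) m).
      intros g [->|(t & -> & Ht)]; simpl; auto using in_map.
    + intros [|e t] Hp; simpl in Hp; [contradiction|].
      destruct Hp as (Hs & _ & [[_ ->]|Hp]); exists e; split; eauto.
Qed.

Hypothesis Y_edge_closed : forall e, Y (src e) -> Y (rng e).

Lemma sat_gen_hereditary : hereditary sat_gen.
Proof.
  intros [v es]. unfold pend; simpl. revert v.
  induction es as [|e t IH]; intros v Hp Hv; simpl; auto.
  apply is_path_cons in Hp as [Hs Hp]. apply IH; auto.
  destruct Hv as [v Hy|v _ Hall]; subst v; auto using sat_gen_base.
Qed.

Lemma sat_closure_sat_gen {w} : sat_closure Y w -> sat_gen w.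
Proof.
  intros Hw. apply Hw.
  - exact sat_gen_hereditary.
  - intros v Hr Hall. apply sat_gen_step; auto.
  - exact sat_gen_base.
Qed.

Lemma sat_closure_incl v : Y v -> sat_closure Y v.
Proof. intros Hy H _ _ HY. auto. Qed.

Lemma entry_path_extend {b v} :
  entry_path (sat_closure Y) v b -> exists g, entry_path Y v (b ++ g).
Proof.
  intros Hb. pose proof (entry_path_endv Hb) as Hend.
  destruct (classic (Y (endv v b))) as [Hy|Hy].
  - exists []. rewrite app_nil_r. exact (entry_path_narrow sat_closure_incl Hb Hy).
  - destruct (sat_gen_entry_path (sat_closure_sat_gen Hend) Hy) as [g Hg].
    exists g. exact (entry_path_app sat_closure_incl Hb Hg).
Qed.

End Closure.
End EntryPaths.

Section ConditionF.
Context {G : graph} (H : V G -> Prop).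

Lemma condF_intro :
  fin H -> fin (F_E H) -> (forall v, ~ B_H H v) -> condF H.
Proof.
  intros finH finF noB. unfold condF.
  apply (fin_subset (Q := fun p => (exists v, H v /\ p = (v, [])) \/ F_E H p)).
  - apply fin_union; [apply fin_image|]; assumption.
  - intros [v es] [(Hnil & Hv)|[(Hf & _)|(_ & Hb)]]; simpl in *.
    + subst es. eauto.
    + auto.
    + exfalso. exact (noB _ Hb).
Qed.

Lemma condF_fin : condF H -> fin H.
Proof.
  intros HF. apply (fin_subset (fin_image fst HF)).
  intros v Hv. exists (v, []). simpl. auto.
Qed.

Lemma condF_fin_F_E : condF H -> (forall v, ~ B_H H v) -> fin (F_E H).
Proof.
  intros HF noB. apply (fin_subset HF). intros p Hp. right. left. split; auto.
Qed.

End ConditionF.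

Section SaturatedClosure.
Context {G : graph} {Y : V G -> Prop}.
Hypothesis Y_edge_closed : forall e, Y (src e) -> Y (rng e).
Let H := sat_closure Y.

Lemma fin_sat_closure : fin Y -> fin (F_E Y) -> fin H.
Proof.
  intros finY finF.
  apply (fin_subset (Q := fun w => Y w \/ exists p, F_E Y p /\ w = fst p)).
  - apply fin_union; [|apply fin_image]; assumption.
  - intros w Hw. destruct (classic (Y w)) as [Hy|Hy]; [auto|right].
    destruct (sat_gen_entry_path _ (sat_closure_sat_gen _ Y_edge_closed Hw) Hy) as [g Hg].
    exists (w, g). split; [apply F_E_entry_path|]; auto.
Qed.

Lemma fin_F_E_sat_closure : fin (F_E Y) -> fin (F_E H).
Proof.
  intros finF. apply (fin_subset (fin_prefixes finF)).
  intros [v b] Hb. apply F_E_entry_path in Hb.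
  destruct (entry_path_extend _ Y_edge_closed Hb) as [g Hg].
  exists g. apply F_E_entry_path. exact Hg.
Qed.

(* An edge from [v] into [H] starts a path of [F_E(Y)], so [v] emits finitely
   many of them. *)
Lemma B_H_sat_closure_empty v : fin (F_E Y) -> ~ B_H H v.
Proof.
  intros finF (Hv & Hinf & _ & Hout). apply Hinf.
  apply (fin_subset (Q := fun e => (src e = v /\ ~ H (rng e)) \/
                                   exists p, F_E Y p /\ In e (snd p))).
  - apply fin_union; [exact Hout|].
    apply (fin_bigcup finF). intros p _. exists (snd p). auto.
  - intros e He. destruct (classic (H (rng e))) as [Hh|Hh]; [right|left; auto].
    assert (Hentry : entry_path H v [e]) by (simpl; auto).
    destruct (entry_path_extend _ Y_edge_closed Hentry) as [g Hg].
    exists (v, e :: g). split; [apply F_E_entry_path; exact Hg|simpl; auto].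
Qed.

Lemma fin_F_E_of_sat_closure : fin H -> fin (F_E H) -> fin (F_E Y).
Proof.
  intros finH finF.
  assert (YH : forall v, Y v -> H v) by exact (sat_closure_incl Y).
  apply (fin_subset (Q := fun p =>
      (exists w, H w /\ (fst p = w /\ entry_path Y w (snd p))) \/
      (exists q, F_E H q /\
         exists g, p = (fst q, snd q ++ g) /\ (g = [] \/ entry_path Y (pend q) g)))).
  - apply fin_union.
    + apply (fin_bigcup finH). intros w Hw.
      destruct (sat_gen_fin_entry_paths _ (sat_closure_sat_gen _ Y_edge_closed Hw)) as [m Hm].
      exists (map (pair w) m). intros [v es] [Hv Hf]. simpl in *. subst v.
      apply in_map. auto.
    + apply (fin_bigcup finF). intros [v b] (_ & _ & _ & _ & Hend).
      destruct (sat_gen_fin_entry_paths _ (sat_closure_sat_gen _ Y_edge_closed Hend)) as [m Hm].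
      exists (map (fun g => (v, b ++ g)) ([] :: m)).
      intros p (g & -> & Hg). apply in_map_iff. exists g.
      split; [reflexivity|destruct Hg as [->|Hg]; simpl; auto].
  - intros [v es] Hf. apply F_E_entry_path in Hf.
    destruct (classic (H v)) as [Hh|Hh]; [left; exists v; simpl; auto|right].
    destruct (entry_path_split YH Hf Hh) as (b & g & -> & Hb & Hg).
    exists (v, b). split; [apply F_E_entry_path; exact Hb|]. exists g. auto.
Qed.

End SaturatedClosure.

Lemma chain_rng {G : graph} {t : list (Ed G)} {e} : chain (e :: t) ->
  forall f, In f (e :: t) -> In (rng f) (map src t) \/ rng f = endv (rng e) t.
Proof.
  revert e. induction t as [|g t IH]; intros e Hc f Hf.
  - destruct Hf as [<-|[]]. right. reflexivity.
  - destruct Hc as [Hr Hc]. destruct Hf as [<-|Hf].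
    + left. simpl. left. congruence.
    + destruct (IH g Hc f Hf) as [Hin|Hend]; [left; simpl; auto|right; exact Hend].
Qed.

Lemma cverts_edge_closed {G : graph} {c : list (Ed G)} :
  is_cycle c -> no_exits c -> forall e, cverts c (src e) -> cverts c (rng e).
Proof.
  intros hc hx e He. destruct c as [|e0 t]; [contradiction|].
  destruct hc as (Hch & Hend & _). unfold cverts in *.
  apply in_map_iff in He as (f & Hfe & Hf).
  assert (e = f) by (apply hx; auto). subst f.
  destruct (chain_rng Hch e Hf) as [Hin|Heq]; simpl; [right; exact Hin|left; congruence].
Qed.

Theorem lemma2p5 (G : graph) (c : list (Ed G))
  (hc : is_cycle c) (hx : no_exits c) :
  fin (F_E (cverts c)) <->
  (condF (sat_closure (cverts c)) /\
   forall v, ~ B_H (sat_closure (cverts c)) v).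
Proof.
  pose proof (cverts_edge_closed hc hx) as closed.
  assert (finY : fin (cverts c)) by (exists (map src c); auto).
  split.
  - intros finF.
    assert (noB : forall v, ~ B_H (sat_closure (cverts c)) v)
      by (intro v; exact (B_H_sat_closure_empty closed v finF)).
    split; [|exact noB].
    apply condF_intro; auto using fin_sat_closure, fin_F_E_sat_closure.
  - intros [HF noB].
    apply (fin_F_E_of_sat_closure closed); auto using condF_fin, condF_fin_F_E.
Qed.
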